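(* Fix an integer $k\ge1$ and let $o^{(k)}_{n,i}$ be the probability that a random Bernoulli text of length $n$ contains exactly $i$ clumps of $w$ that consist of exactly $k$ occurrences of $w$ ($k$-clumps). Define $$\mathfrak{K}^{(k)}(z,v)=\pi_w z^{\ell}\left(\frac{1}{1-K(z)}+(v-1)K(z)^{k-1}\right).$$ Then $$\sum_{n,i\ge0}o^{(k)}_{n,i}\,v^i z^n=N(z)+\frac{R(z)}{\pi_w z^{\ell}}\,\mathfrak{K}^{(k)}(z,v)\,\frac{1}{1-\dfrac{M(z)-K(z)}{\pi_w z^{\ell}}\,\mathfrak{K}^{(k)}(z,v)}\,U(z).$$
   Context: Let $\mathcal{A}$ be a finite alphabet with $|\mathcal{A}|\ge2$ and $w\in\mathcal{A}^*$ a fixed word of length $\ell=|w|\ge 2$. Bernoulli model: each letter $a$ has probability $p_a>0$, $\sum_a p_a=1$, $\mathbf{P}(a_1\cdots a_n)=\prod_i p_{a_i}$; for a language $L$, $L(z)=\sum_{x\in L}\mathbf{P}(x)z^{|x|}$; $\pi_w=\mathbf{P}(w)$. Occurrences of $w$ are position intervals where $w$ appears; two occurrences overlap if their intervals share a position; clumps are equivalence classes of occurrences under the transitive closure of overlapping; a $k$-clump is a clump containing exactly $k$ occurrences. Autocorrelation set $\mathcal{C}=\{\epsilon\}\cup\{e\in\mathcal{A}^+: |e|<\ell,\ \exists e'\in\mathcal{A}^+,\ we=e'w\}$, $\mathcal{C}_\circ=\mathcal{C}\setminus\{\epsilon\}$, $\mathcal{K}=\mathcal{C}_\circ\setminus\mathcal{C}_\circ\mathcal{A}^+$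 with generating function $K(z)$. Languages: $\mathcal{R}=\{r\in\mathcal{A}^*w: \text{no } r=xwy,\ |y|>0\}$; $\mathcal{M}=\{m\in\mathcal{A}^+: wm\in\mathcal{A}^*w,\ \text{no } wm=xwy,\ |x|>0,|y|>0\}$; $\mathcal{U}=\{u\in\mathcal{A}^*: \text{no } wu=xwy,\ |x|>0\}$; $\mathcal{N}=\{n: w\text{ not a factor of }n\}$, with generating functions $R,M,U,N$; explicitly, with $C(z)$ the generating function of $\mathcal{C}$ and $D(z)=\pi_w z^{\ell}+(1-z)C(z)$: $R=\pi_w z^\ell/D$, $M=1+(z-1)/D$, $U=1/D$, $N=C/D$. *)

From HB Require Import structures.
From mathcomp Require Import all_boot all_order all_algebra.
Set Implicit Arguments. Unset Strict Implicit. Unset Printing Implicit Defensive.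
Import Order.TTheory GRing.Theory Num.Theory.
Local Open Scope ring_scope.

(* A series is its coefficient sequence: f n = [z^n] f.                      *)
Definition fps (S : Type) := nat -> S.

Section FPS.
Variable S : unitRingType.

Definition fps_C (c : S) : fps S := fun n => if n == 0%N then c else 0.
Definition fps_one : fps S := fps_C 1.
Definition fps_Xn (l : nat) : fps S := fun n => if n == l then 1 else 0.
Definition fps_add (f g : fps S) : fps S := fun n => f n + g n.
Definition fps_sub (f g : fps S) : fps S := fun n => f n - g n.
Definition fps_mul (f g : fps S) : fps S :=
  fun n => \sum_(j < n.+1) f j * g (n - j)%N.
Definition fps_scale (c : S) (f : fps S) : fps S := fun n => c * f n.
Definition fps_exp (f : fps S) (m : nat) : fps S := iter m (fps_mul f) fps_one.
(* Division by z^l (exact when the first l coefficients of f vanish). *)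
Definition fps_divXn (l : nat) (f : fps S) : fps S := fun n => f (n + l)%N.
(* Multiplicative inverse (for f 0 a unit):
   g 0 = (f 0)^-1,  g n = - (f 0)^-1 * \sum_(j < n) f (n - j) * g j. *)
Fixpoint fps_inv_seq (f : fps S) (n : nat) : seq S :=
  match n with
  | 0 => [:: (f 0%N)^-1]
  | n'.+1 => let s := fps_inv_seq f n' in
      rcons s (- (f 0%N)^-1 * \sum_(j < n'.+1) f (n'.+1 - j)%N * nth 0 s j)
  end.
Definition fps_inv (f : fps S) : fps S := fun n => nth 0 (fps_inv_seq f n) n.
End FPS.

Section Words.
Variable A : finType.
Variable w : seq A.

Definition occ (x : seq A) (i : nat) : bool :=
  (i + size w <= size x)%N && (take (size w) (drop i x) == w).

Definition ovl (x : seq A) : rel 'I_(size x) :=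
  fun i j => [&& occ x i, occ x j, (i < j + size w)%N & (j < i + size w)%N].

Definition clumps (x : seq A) : {set {set 'I_(size x)}} :=
  [set [set j : 'I_(size x) | connect (@ovl x) i j] | i : 'I_(size x) & occ x i].

Definition nkclumps (k : nat) (x : seq A) : nat :=
  #|[set c in clumps x | #|c| == k]|.

(* autocorrelation set C (including epsilon) *)
Definition inC (e : seq A) : bool :=
  (e == [::]) ||
  [&& (0 < size e)%N, (size e < size w)%N &
      [exists e' : (size e).-tuple A, (0 < size e')%N && (w ++ e == e' ++ w)]].
Definition inCo (e : seq A) : bool := inC e && (e != [::]).
(* K = C_o \ C_o A^+ *)
Definition inK (e : seq A) : bool :=
  inCo e && ~~ [exists j : 'I_(size e), inCo (take j e) && (0 < size (drop j e))%N].
(* R : words of A^* w with no decomposition r = x w y, |y| > 0 *)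
Definition inR (r : seq A) : bool :=
  suffix w r && [forall i : 'I_(size r).+1, occ r i ==> (size r <= i + size w)%N].
(* M : m in A^+, w m in A^* w, no w m = x w y with |x|>0, |y|>0 *)
Definition inM (m : seq A) : bool :=
  [&& (0 < size m)%N, suffix w (w ++ m) &
      [forall i : 'I_(size (w ++ m)).+1,
          occ (w ++ m) i ==> ((i == 0%N :> nat) || (size (w ++ m) <= i + size w)%N)]].
(* U : no w u = x w y with |x| > 0 *)
Definition inU (u : seq A) : bool :=
  [forall i : 'I_(size (w ++ u)).+1, occ (w ++ u) i ==> (i == 0%N :> nat)].
Definition inN (x : seq A) : bool := ~~ infix w x.
End Words.

Section GF.
Variable R : fieldType.
Variable A : finType.
Variable p : A -> R.

Definition Pw (x : seq A) : R := \prod_(a <- x) p a.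

(* generating function L(z) = sum_{x in L} P(x) z^|x|, coefficients as
   constant polynomials in v *)
Definition gf (L : pred (seq A)) : fps {poly R} :=
  fun n => (\sum_(x : n.-tuple A | L x) Pw x)%:P.

Variable w : seq A.
Variable k : nat.

Definition o_k (n i : nat) : R :=
  \sum_(x : n.-tuple A | nkclumps w k x == i) Pw x.

Definition pi_w : R := Pw w.
Definition ell : nat := size w.

Definition Kg := gf (inK w).
Definition Rg := gf (inR w).
Definition Mg := gf (inM w).
Definition Ug := gf (inU w).
Definition Ng := gf (inN w).

(* frak K^{(k)}(z,v) = pi_w z^l (1/(1-K(z)) + (v-1) K(z)^{k-1}); v = 'X *)
Definition frakK : fps {poly R} :=
  fps_scale pi_w%:P
    (fps_mul (fps_Xn _ ell)
       (fps_add (fps_inv (fps_sub (fps_one _) Kg))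
                (fps_mul (fps_C ('X - 1)) (fps_exp Kg (k - 1))))).

Definition div_piz (f : fps {poly R}) : fps {poly R} :=
  fps_scale (pi_w^-1)%:P (fps_divXn ell f).

Definition rhs7 : fps {poly R} :=
  fps_add Ng
    (fps_mul
       (fps_mul (fps_mul (div_piz Rg) frakK)
          (fps_inv (fps_sub (fps_one _) (fps_mul (div_piz (fps_sub Mg Kg)) frakK))))
       Ug).
End GF.

From Pilot Require Import Defs.
From HB Require Import structures.
From mathcomp Require Import all_boot all_order all_algebra.
From Stdlib Require Import FunctionalExtensionality.
Set Implicit Arguments. Unset Strict Implicit. Unset Printing Implicit Defensive.

(* A text x contains no occurrence of w (x in N), or factors
   uniquely as x = r z with r in R ending with the first occurrence of w.  From
   then on the text is read occurrence by occurrence: after an occurrence whose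
   clump currently holds c occurrences, either no further occurrence follows
   (the rest is in U), or the next occurrence ends after a factor m in M; it
   overlaps the previous one iff |m| < |w|, i.e. m in K.  With Z_c the
   generating function of such continuations this gives the linear system
       F = N + R Z_1,    Z_c = v^[c = k] (U + (M - K) Z_1) + K Z_(c+1),
   with Z_c = Z_(k+1) for c > k.  Solving it downwards from c = k+1 yields
   Z_1 = Q (U + (M - K) Z_1) with Q = 1/(1 - K) + (v - 1) K^(k-1), i.e.
   Q = frakK / (pi_w z^l), and eliminating Z_1 gives the formula. *)

Lemma connect_closed (T : finType) (e : rel T) (P : pred T) x y :
  (forall u v, P u -> e u v -> P v) -> P x -> connect e x y -> P y.
Proof.
move=> closedP Px /connectP [q pth ->]; elim: q x Px pth => //= b q IHq x Px.
by case/andP=> exb pth; apply: IHq pth; apply: closedP exb.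
Qed.

Lemma connect_restrict (T : finType) (e e' : rel T) (P : pred T) x y :
  (forall u v, P u -> e u v -> P v && e' u v) -> P x -> connect e x y -> connect e' x y.
Proof.
move=> closedP Px /connectP [q pth ->]; elim: q x Px pth => [x _ _|b q IHq x Px].
  exact: connect0.
case/andP=> exb pth; case/andP: (closedP _ _ Px exb) => Pb e'xb.
exact: connect_trans (connect1 e'xb) (IHq b Pb pth).
Qed.

(* Given the strictly increasing list O of the
   starting positions (in [0, n)) of the occurrences of a word of length l,
   two occurrences overlap iff their positions differ by less than l.  Since O
   is sorted, a clump is a maximal run of consecutive elements of O with gaps
   < l, and the number of clumps of size k is computed by a single left-to-right
   scan of O. *)
Section PositionClumps.
Variables l n k : nat.
Hypothesis l_gt0 : (0 < l)%N.

Definition overlap_in (O : seq nat) : rel 'I_n := fun i j =>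
  [&& (i : nat) \in O, (j : nat) \in O, (i < j + l)%N & (j < i + l)%N].
Definition clump_in O (i : 'I_n) : {set 'I_n} := [set j | connect (overlap_in O) i j].
Definition clumps_in O := [set clump_in O i | i : 'I_n & (i : nat) \in O].
Definition nkclumps_in O := #|[set c in clumps_in O | #|c| == k]|.

Fixpoint run_length (a : nat) (s : seq nat) : nat :=
  if s is b :: t then if (b < a + l)%N then (run_length b t).+1 else 0 else 0.

(* Number of k-clumps of a :: s when the clump of a already contains c
   positions (a being its last one). *)
Fixpoint scan (a c : nat) (s : seq nat) : nat :=
  if s is b :: t then
    if (b < a + l)%N then scan b c.+1 t else (c == k) + scan b 1 t
  else (c == k).

Definition scan_seq s := if s is a :: t then scan a 1 t else 0.

Lemma run_length_le a s : (run_length a s <= size s)%N.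
Proof. by elim: s a => //= b t IHt a; case: ifP => // _; rewrite ltnS IHt. Qed.

Lemma scan_run a c s :
  scan a c s = (c + run_length a s == k) + scan_seq (drop (run_length a s) s).
Proof.
elim: s a c => [|b t IHt] a c /=; first by rewrite !addn0.
case: ifP => _; last by rewrite addn0 drop0.
by rewrite IHt addnS addSn.
Qed.

Lemma scan_shift a c s d : (d <= a)%N -> all (leq d) s ->
  scan a c s = scan (a - d) c (map (subn^~ d) s).
Proof.
elim: s a c => [|b s IHs] a c //= le_da /andP [le_db le_ds].
by rewrite addnBAC // ltn_sub2rE // -!IHs // (leq_trans le_da).
Qed.

(* A clump that already has more than k occurrences is never counted, so all
   such states behave alike. *)
Lemma scan_saturated a c c' s : (k < c)%N -> (k < c')%N -> scan a c s = scan a c' s.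
Proof.
elim: s a c c' => [|b s IHs] a c c' gt_ck gt_c'k /=; first by rewrite !gtn_eqF.
by case: ifP => _; [apply: IHs; apply: ltnW | rewrite !gtn_eqF].
Qed.

Lemma run_separated a s : sorted ltn (a :: s) ->
  forall u v, u \in a :: take (run_length a s) s ->
  v \in drop (run_length a s) s -> (u + l <= v)%N.
Proof.
elim: s a => [|b t IHt] a //= /andP [lt_ab sorted_t] u v.
case: ifP => near_b.
  rewrite /= inE => /orP [/eqP ->|u_run] v_rest; last exact: (IHt b sorted_t).
  apply: leq_trans (IHt b sorted_t b v (mem_head _ _) v_rest).
  by rewrite leq_add2r ltnW.
rewrite take0 drop0 inE => /eqP -> /[!inE] /orP [/eqP ->|v_t]; first by rewrite leqNgt near_b.
have /allP/(_ v v_t) lt_bv := order_path_min ltn_trans sorted_t.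
by apply: leq_trans (ltnW lt_bv); rewrite leqNgt near_b.
Qed.

Lemma run_connected O a s : {subset a :: s <= O} -> sorted ltn (a :: s) ->
  all (fun u => u < n)%N (a :: s) ->
  forall ia : 'I_n, (ia : nat) = a ->
  forall j : 'I_n, (j : nat) \in a :: take (run_length a s) s -> connect (overlap_in O) ia j.
Proof.
have head_conn (ia j : 'I_n) a' : (ia : nat) = a' -> j == a' :> nat -> connect (overlap_in O) ia j.
  by move=> ea /eqP ej; rewrite (_ : j = ia) ?connect0 //; apply: val_inj; rewrite /= ej ea.
elim: s a => [|b t IHt] a subO /= sorted_s lt_n ia ea j.
  by rewrite inE; apply: head_conn.
case: ifP => near_b; last by rewrite take0 inE; apply: head_conn.
case/andP: sorted_s => lt_ab sorted_t; case/and3P: lt_n => _ lt_bn lt_n.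
rewrite inE => /orP [|j_run]; first exact: head_conn.
have ov_ab : overlap_in O ia (Ordinal lt_bn).
  by rewrite /overlap_in /= ea !subO ?inE ?eqxx ?orbT // near_b ltn_addr.
apply: connect_trans (connect1 ov_ab) _.
apply: (IHt b) => //; last by rewrite /= lt_bn.
by move=> u u_t; apply: subO; rewrite inE u_t orbT.
Qed.

Lemma card_positions (s : seq nat) : uniq s -> all (fun u => u < n)%N s ->
  #|[set j : 'I_n | (j : nat) \in s]| = size s.
Proof.
move=> uniq_s lt_n; rewrite cardE -(size_map val); apply: perm_size.
apply: uniq_perm => [||u]; first by rewrite map_inj_uniq ?enum_uniq //; apply: val_inj.
  by [].
apply/mapP/idP => [[j]|s_u]; first by rewrite mem_enum inE => ? ->.
by exists (Ordinal (allP lt_n u s_u)); rewrite // mem_enum inE.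
Qed.

Lemma overlap_in_sym O : symmetric (overlap_in O).
Proof. by move=> i j; rewrite /overlap_in; do 2!case: (_ \in O); rewrite //= andbC. Qed.

Lemma nkclumps_in_nil : nkclumps_in [::] = 0.
Proof.
apply/eqP; rewrite cards_eq0; apply/eqP/setP => c; rewrite !inE.
by apply/negbTE/negP => /andP [/imsetP [i]]; rewrite inE in_nil.
Qed.

Section FirstClump.
Variables (a : nat) (s : seq nat).
Hypothesis sorted_O : sorted ltn (a :: s).
Hypothesis lt_n : all (fun u => u < n)%N (a :: s).

Let O := a :: s.
Let O1 := a :: take (run_length a s) s.
Let O2 := drop (run_length a s) s.
Let C1 := [set j : 'I_n | (j : nat) \in O1].

Let splitO : O = O1 ++ O2.
Proof. by rewrite /O /O1 /O2 cat_cons cat_take_drop. Qed.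

Let memO u : (u \in O) = (u \in O1) || (u \in O2).
Proof. by rewrite splitO mem_cat. Qed.

Let a_lt_n : (a < n)%N. Proof. by case/andP: lt_n. Qed.

Lemma clump_in_first_run (i : 'I_n) : (i : nat) \in O1 -> clump_in O i = C1.
Proof.
have conn := run_connected (fun u h => h) sorted_O lt_n (erefl : (Ordinal a_lt_n : nat) = a).
move=> i_O1; apply/setP => j; rewrite !inE; apply/idP/idP => [ij|j_O1].
  apply: (connect_closed (P := fun j : 'I_n => (j : nat) \in O1)) i_O1 ij.
  move=> u v u_O1 /and4P [_]; rewrite memO => /orP [//|v_O2] _ lt_vu.
  by have := run_separated sorted_O u_O1 v_O2; rewrite leqNgt lt_vu.
apply: connect_trans (conn j j_O1).
by rewrite (sym_connect_sym (@overlap_in_sym O)); apply: conn.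
Qed.

Lemma clump_in_rest (i : 'I_n) : (i : nat) \in O2 -> clump_in O i = clump_in O2 i.
Proof.
move=> i_O2; apply/setP => j; rewrite !inE; apply/idP/idP => ij.
  apply: (connect_restrict (P := fun j : 'I_n => (j : nat) \in O2)) i_O2 ij.
  move=> u v u_O2 /and4P [_ v_O lt_uv lt_vu]; rewrite /overlap_in u_O2 lt_uv lt_vu !andbT.
  move: v_O; rewrite memO => /orP [v_O1|->] //.
  by have := run_separated sorted_O v_O1 u_O2; rewrite leqNgt lt_uv.
apply: connect_sub ij => u v /and4P [u_O2 v_O2 lt_uv lt_vu]; apply: connect1.
by rewrite /overlap_in lt_uv lt_vu !memO u_O2 v_O2 !orbT.
Qed.

Lemma clumps_in_cons : clumps_in O = C1 |: clumps_in O2.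
Proof.
apply/setP => c; rewrite in_setU1; apply/imsetP/orP => [[i]|].
  rewrite inE memO => /orP [i_O1|i_O2] ->; first by left; rewrite clump_in_first_run.
  by right; rewrite clump_in_rest //; apply/imsetP; exists i; rewrite ?inE.
case => [/eqP ->|/imsetP [i]].
  exists (Ordinal a_lt_n); first by rewrite inE mem_head.
  by rewrite clump_in_first_run ?mem_head.
by rewrite inE => i_O2 ->; exists i; rewrite ?clump_in_rest // inE memO i_O2 orbT.
Qed.

Lemma first_clump_new : C1 \notin clumps_in O2.
Proof.
apply/negP => /imsetP [i]; rewrite inE => i_O2 eC1.
have : i \in C1 by rewrite eC1 inE connect0.
rewrite inE => i_O1; have := run_separated sorted_O i_O1 i_O2.
by rewrite leqNgt -{1}(addn0 i) ltn_add2l l_gt0.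
Qed.

Lemma card_first_clump : #|C1| = (run_length a s).+1.
Proof.
have /(sorted_uniq ltn_trans ltnn) : sorted ltn O by [].
rewrite splitO cat_uniq => /andP [uniq_O1 _].
have lt_n1 : all (fun u => u < n)%N O1.
  by apply/allP => u u_O1; apply: (allP lt_n); rewrite -/O memO u_O1.
by rewrite card_positions //= size_takel // run_length_le.
Qed.

Lemma nkclumps_in_cons :
  nkclumps_in O = ((run_length a s).+1 == k) + nkclumps_in O2.
Proof.
rewrite /nkclumps_in clumps_in_cons -card_first_clump.
have C1_new := first_clump_new.
case: eqP => [cardC1|cardC1]; last first.
  apply: eq_card => c; rewrite !inE; case: eqP => [->|] //=.
  by move/eqP/negbTE: cardC1 ->; rewrite andbF.
rewrite (_ : [set c in _ | _] = C1 |: [set c in clumps_in O2 | #|c| == k]).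
  by rewrite cardsU1 inE (negbTE C1_new).
by apply/setP => c; rewrite !inE; case: eqP => [->|]; rewrite ?cardC1 ?eqxx.
Qed.

Lemma sorted_rest : sorted ltn O2.
Proof. by apply: (subseq_sorted ltn_trans (drop_subseq _ _)); apply: path_sorted sorted_O. Qed.

Lemma lt_n_rest : all (fun u => u < n)%N O2.
Proof. by apply/allP => u u_O2; apply: (allP lt_n); rewrite -/O memO u_O2 orbT. Qed.

End FirstClump.

Lemma nkclumps_in_scan O : sorted ltn O -> all (fun u => u < n)%N O ->
  nkclumps_in O = scan_seq O.
Proof.
move: {2}(size O) (leqnn (size O)) => m; elim: m O => [|m IHm] [|a s] //=;
  try by move=> *; apply: nkclumps_in_nil.
move=> size_s sorted_O lt_n.
rewrite nkclumps_in_cons // scan_run add1n; congr (_ + _).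
apply: IHm; [|exact: sorted_rest|exact: lt_n_rest].
by rewrite size_drop (leq_trans (leq_subr _ _)).
Qed.

End PositionClumps.

Section Occurrences.
Variable A : finType.
Variable w : seq A.
Hypothesis w_neq0 : (0 < size w)%N.
Local Notation l := (size w).
Local Notation occ := (occ w).

Lemma occ_drop x d i : occ (drop d x) i = occ x (i + d).
Proof.
rewrite /Defs.occ size_drop drop_drop; case: (leqP d (size x)) => le_dx.
  by rewrite leq_subRL // addnCA addnA.
have -> : (size x - d = 0)%N by apply/eqP; rewrite subn_eq0 ltnW.
rewrite leqNgt (leq_trans w_neq0 (leq_addl _ _)) /=; symmetry; apply/negbTE.
by rewrite negb_and -ltnNge (leq_trans le_dx) // addnAC leq_addl.
Qed.

Lemma occ_take x m i : occ (take m x) i = occ x i && (i + l <= m)%N.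
Proof.
rewrite /Defs.occ size_take_min; case: (leqP (i + l) m) => [le_im|lt_mi].
  have le_i : (i <= m)%N by apply: leq_trans le_im; apply: leq_addr.
  rewrite andbT -[in take m x](subnK le_i) -take_drop take_takel;
    last by rewrite leq_subRL // addnC.
  by rewrite leq_min le_im.
by rewrite andbF leq_min leqNgt lt_mi.
Qed.

Lemma occ_cat_head z : occ (w ++ z) 0.
Proof. by rewrite /Defs.occ size_cat leq_addr drop0 take_size_cat /=. Qed.

Lemma cat_drop_occ x d : occ x d -> w ++ drop (d + l) x = drop d x.
Proof.
by case/andP => _ /eqP e; rewrite -[RHS](cat_take_drop l) e drop_drop addnC.
Qed.

Lemma occ_cat_shift (u v : seq A) i : occ (u ++ v) (size u + i) = occ v i.
Proof. by rewrite addnC -occ_drop drop_size_cat. Qed.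

Lemma suffix_occ r : suffix w r = (l <= size r)%N && occ r (size r - l).
Proof.
rewrite suffixE; case: (leqP l (size r)) => [le_lr|lt_rl] /=.
  by rewrite /Defs.occ subnK // leqnn take_oversize // size_drop subKn.
have -> : (size r - l = 0)%N by apply/eqP; rewrite subn_eq0 ltnW.
by rewrite drop0; apply/negbTE; apply: contraTneq lt_rl => ->; rewrite ltnn.
Qed.

Lemma occ_lt_size x i : occ x i -> (i < size x)%N.
Proof. by case/andP => le_ix _; apply: leq_trans le_ix; rewrite -addn1 leq_add2l. Qed.

Lemma infix_occ x : infix w x = [exists i : 'I_(size x), occ x i].
Proof.
apply/infixP/existsP => [[s [s' e]]|[i occ_i]].
  have occ_s : occ x (size s) by rewrite e -(addn0 (size s)) occ_cat_shift occ_cat_head.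
  by exists (Ordinal (occ_lt_size occ_s)).
by exists (take i x), (drop (i + l) x); rewrite cat_drop_occ // cat_take_drop.
Qed.

Definition occs x := [seq i <- iota 0 (size x) | occ x i].

Lemma mem_occs x i : (i \in occs x) = occ x i.
Proof.
rewrite mem_filter mem_iota add0n /=.
by case occ_i: (occ x i) => //=; apply: occ_lt_size.
Qed.

Lemma sorted_occs x : sorted ltn (occs x).
Proof. exact: (sorted_filter ltn_trans _ (iota_ltn_sorted 0 _)). Qed.

Lemma occs_lt_size x : all (fun i => i < size x)%N (occs x).
Proof. by apply/allP => i; rewrite mem_occs; apply: occ_lt_size. Qed.

Lemma occs_nil x : occs x = [::] -> forall i, ~~ occ x i.
Proof. by move=> e i; rewrite -mem_occs e. Qed.

Lemma occs_cons x a s : occs x = a :: s ->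
  [/\ occ x a, (forall i, (i < a)%N -> ~~ occ x i) &
      forall i, (i \in s) = (a < i)%N && occ x i].
Proof.
move=> e; have := sorted_occs x; rewrite e /= => /(order_path_min ltn_trans)/allP gt_a.
have occsE i : occ x i = (i == a) || (i \in s) by rewrite -mem_occs e inE.
split; first by rewrite occsE eqxx.
  move=> i lt_ia; rewrite occsE (ltn_eqF lt_ia) /=.
  by apply/negP => /gt_a; rewrite ltnNge ltnW.
move=> i; apply/idP/andP => [s_i|[lt_ai]]; first by rewrite gt_a // occsE s_i orbT.
by rewrite occsE (gtn_eqF lt_ai).
Qed.

Lemma occs_drop x d : (d <= size x)%N ->
  occs (drop d x) = map (subn^~ d) (filter (leq d) (occs x)).
Proof.
move=> le_dx; rewrite /occs size_drop -{2}(subnKC le_dx) iotaD !filter_cat.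
have -> : [seq i <- [seq i <- iota 0 d | occ x i] | (d <= i)%N] = [::].
  apply/eqP; rewrite -(negbK (_ == _)) -has_filter; apply/hasPn => i.
  by rewrite mem_filter mem_iota add0n -ltnNge => /andP [_ /andP []].
rewrite cat0s (_ : filter (leq d) _ = filter (occ x) (iota d (size x - d))); last first.
  by apply/all_filterP/allP => i; rewrite mem_filter mem_iota => /andP [_ /andP [->]].
have -> : iota d (size x - d) = map (addn d) (iota 0 (size x - d)).
  by rewrite -iotaDl addn0.
rewrite filter_map -map_comp.
rewrite (eq_map (g := id)) => [|i /=]; last by rewrite addKn.
by rewrite map_id; apply: eq_filter => i /=; rewrite occ_drop addnC.
Qed.

End Occurrences.

Section ClumpsOfWords.
Variable A : finType.
Variable w : seq A.
Variable k : nat.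
Hypothesis w_neq0 : (0 < size w)%N.
Local Notation l := (size w).
Local Notation occ := (occ w).
Local Notation occs := (occs w).

Lemma nkclumps_scan x : nkclumps w k x = scan_seq l k (occs x).
Proof.
rewrite -(@nkclumps_in_scan l (size x)) ?sorted_occs ?occs_lt_size //.
have mem_occ (i : 'I_(size x)) : ((i : nat) \in occs x) = occ x i by rewrite mem_occs.
have eq_ovl : @ovl A w x =2 overlap_in l (occs x) by move=> i j; rewrite /ovl /overlap_in !mem_occ.
apply: eq_card => c; rewrite !inE; congr (_ && _).
apply/imsetP/imsetP => [][i occ_i ->]; exists i; rewrite ?inE ?mem_occ // in occ_i *;
  by apply/setP => j; rewrite !inE (eq_connect eq_ovl).
Qed.

(* Number of k-clumps of w ++ z, when the clump of the leading occurrence of w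
   is assumed to contain already c occurrences. *)
Definition kclumps_after (c : nat) (z : seq A) : nat :=
  scan l k 0 c (behead (occs (w ++ z))).

Lemma occs_wcat z : occs (w ++ z) = 0 :: behead (occs (w ++ z)).
Proof. by rewrite /occs size_cat; case: l w_neq0 => // l' _; rewrite addSn /= occ_cat_head. Qed.

Lemma occs_cons2 x a b s : occs x = a :: b :: s ->
  [/\ occ x b, (a < b)%N, (forall i, (a < i < b)%N -> ~~ occ x i) & all (leq b) s].
Proof.
move=> e; case: (occs_cons w_neq0 e) => _ _ mem_s.
have /(order_path_min ltn_trans)/allP gt_b : path ltn b s.
  by have := sorted_occs w x; rewrite e /= => /andP [].
have /andP [lt_ab occ_b] : (a < b)%N && occ x b by rewrite -mem_s mem_head.
split => //; last by apply/allP => i /gt_b /ltnW.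
move=> i /andP [lt_ai lt_ib]; apply/negP => occ_i.
have : i \in b :: s by rewrite mem_s lt_ai occ_i.
rewrite inE => /orP [/eqP ei|/gt_b]; first by rewrite ei ltnn in lt_ib.
by rewrite ltnNge (ltnW lt_ib).
Qed.

Lemma occs_single x a : occs x = [:: a] -> forall i, (a < i)%N -> ~~ occ x i.
Proof.
by move=> e i lt_ai; case: (occs_cons w_neq0 e) => _ _ /(_ i); rewrite in_nil lt_ai /= => <-.
Qed.

Lemma inR_take x j : (j <= size x)%N ->
  inR w (take j x) = (l <= j)%N && occ x (j - l) && [forall i : 'I_(j - l), ~~ occ x i].
Proof.
move=> le_jx; rewrite /inR suffix_occ size_takel //.
case: (leqP l j) => //= le_lj; rewrite occ_take subnK // leqnn andbT.
case: (occ x (j - l)) => //=; apply/forallP/forallP => no_occ i.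
  apply/negP => occ_i.
  have lt_ij : (i + l < j)%N by rewrite addnC -ltn_subRL.
  have le_ij : (i < j.+1)%N by rewrite ltnS (leq_trans (leq_addr l i) (ltnW lt_ij)).
  by have := no_occ (Ordinal le_ij); rewrite /= occ_take occ_i (ltnW lt_ij) /= leqNgt lt_ij.
apply/implyP; rewrite occ_take => /andP [occ_i le_ij].
case: (ltnP i (j - l)) => [lt_i|]; first by have := no_occ (Ordinal lt_i); rewrite occ_i.
by rewrite -(leq_add2r l) subnK.
Qed.

Lemma inR_take_first x a s j : occs x = a :: s -> (j <= size x)%N ->
  inR w (take j x) = (j == a + l).
Proof.
move=> e le_jx; case: (occs_cons w_neq0 e) => occ_a before_a _.
rewrite inR_take //; apply/idP/eqP => [/andP [/andP [le_lj occ_j] /forallP no_occ]|->].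
  apply/eqP; rewrite -(subnK le_lj) eqn_add2r eqn_leq.
  apply/andP; split; rewrite leqNgt; apply/negP.
    by move=> lt_a; have := no_occ (Ordinal lt_a); rewrite occ_a.
  by move=> lt_j; have := before_a _ lt_j; rewrite occ_j.
by rewrite leq_addl addnK occ_a /=; apply/forallP => i; apply: before_a.
Qed.

Lemma inR_take_nil x j : occs x = [::] -> inR w (take j x) = false.
Proof. by move=> e; rewrite /inR suffix_occ occ_take (negbTE (occs_nil w_neq0 e _)) andbF. Qed.

Lemma inN_occs x : inN w x = (occs x == [::]).
Proof.
rewrite /inN (infix_occ w_neq0); apply/negP/eqP => [no_occ|e].
  case e: (occs x) => [|a s] //; case: (occs_cons w_neq0 e) => occ_a _ _.
  by case: no_occ; apply/existsP; exists (Ordinal (occ_lt_size w_neq0 occ_a)).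
by case/existsP => i; rewrite (negbTE (occs_nil w_neq0 e _)).
Qed.

Lemma inM_occ m : inM w m =
  [&& (0 < size m)%N, occ (w ++ m) (size m) &
      [forall i : 'I_(size m), (0 < i)%N ==> ~~ occ (w ++ m) i]].
Proof.
rewrite /inM suffix_occ size_cat leq_addr addKn /=.
case: (0 < size m)%N; case: (occ (w ++ m) (size m)) => //=.
apply/forallP/forallP => no_occ i.
  apply/implyP => i_gt0; apply/negP => occ_i.
  have le_i : (i < (l + size m).+1)%N by rewrite ltnS (leq_trans (ltnW (ltn_ord i))) ?leq_addl.
  have := no_occ (Ordinal le_i); rewrite /= occ_i /= eqn0Ngt i_gt0 /= addnC leq_add2r.
  by rewrite leqNgt ltn_ord.
apply/implyP => occ_i; case: (ltnP i (size m)) => [lt_im|le_mi].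
  by have := no_occ (Ordinal lt_im); rewrite /= occ_i implybF -eqn0Ngt => ->.
by apply/orP; right; apply: (@leq_trans (size m + l)); rewrite ?leq_add2r // addnC.
Qed.

Lemma cat_take z j : w ++ take j z = take (l + j) (w ++ z).
Proof. by rewrite take_cat ltnNge leq_addr /= addKn. Qed.

Lemma inM_take z j : (j <= size z)%N ->
  inM w (take j z) = [&& (0 < j)%N, occ (w ++ z) j &
      [forall i : 'I_j, (0 < i)%N ==> ~~ occ (w ++ z) i]].
Proof.
move=> le_jz; rewrite inM_occ size_takel // cat_take occ_take addnC leqnn andbT.
case: (0 < j)%N; case: (occ (w ++ z) j) => //=.
by apply: eq_forallb => i; rewrite occ_take [(l + j)%N]addnC leq_add2r (ltnW (ltn_ord i)) andbT.
Qed.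

Lemma inM_take_second z s b j : occs (w ++ z) = 0 :: b :: s -> (j <= size z)%N ->
  inM w (take j z) = (j == b).
Proof.
move=> e le_jz; case: (occs_cons2 e) => occ_b b_gt0 between _.
rewrite inM_take //; apply/idP/eqP => [/and3P [j_gt0 occ_j /forallP no_occ]|->].
  apply/eqP; rewrite eqn_leq; apply/andP; split; rewrite leqNgt; apply/negP.
    by move=> lt_bj; have := no_occ (Ordinal lt_bj); rewrite /= b_gt0 occ_b.
  by move=> lt_jb; have := between j; rewrite j_gt0 lt_jb occ_j => /(_ isT).
rewrite b_gt0 occ_b /=; apply/forallP => i; apply/implyP => i_gt0.
by apply: between; rewrite i_gt0 ltn_ord.
Qed.

Lemma inM_take_nil z j : occs (w ++ z) = [:: 0] -> inM w (take j z) = false.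
Proof.
move=> e; rewrite inM_occ size_take_min cat_take occ_take.
by case: (ltnP 0 (minn j (size z))) => //= pos; rewrite (negbTE (occs_single e pos)).
Qed.

Lemma inU_occs z : inU w z = (behead (occs (w ++ z)) == [::]).
Proof.
rewrite /inU; case e: (behead _) => [|b s] /=.
  apply/forallP => i; apply/implyP => occ_i; rewrite -leqn0 leqNgt; apply/negP => i_gt0.
  by have := occs_wcat z; rewrite e => /occs_single /(_ i i_gt0); rewrite occ_i.
apply/negP => /forallP no_occ; have := occs_wcat z; rewrite e => /occs_cons2 [occ_b b_gt0 _ _].
have := no_occ (Ordinal (ltnW (occ_lt_size w_neq0 occ_b) : (b < (size (w ++ z)).+1)%N)).
by rewrite /= occ_b /= eqn0Ngt b_gt0.
Qed.

Lemma inCo_occ e : inCo w e = [&& (0 < size e)%N, (size e < l)%N & occ (w ++ e) (size e)].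
Proof.
rewrite /inCo /inC; case: e => [|a e'] //=; set e := a :: e'.
rewrite andbT /=; case: (size e < l)%N => //=.
have -> : occ (w ++ e) (size e) = suffix w (w ++ e).
  by rewrite suffix_occ size_cat leq_addr addKn.
apply/existsP/suffixP => [[t /andP [_ /eqP ->]]|[s2 e2]]; first by exists t.
have size_s2 : size s2 == size e.
  by have := congr1 size e2; rewrite !size_cat addnC => /addIn ->.
by exists (Tuple size_s2); rewrite /= e2 (eqP size_s2) eqxx.
Qed.

Lemma inK_inM e : inK w e = inM w e && (size e < l)%N.
Proof.
rewrite /inK inCo_occ inM_occ.
case: (ltnP 0 (size e)) => //= e_gt0; case: (ltnP (size e) l) => lt_el; last by rewrite !andbF.
rewrite andbT; case: (occ (w ++ e) (size e)) => //=.
rewrite negb_exists; apply: eq_forallb => j.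
rewrite inCo_occ size_takel ?(ltnW (ltn_ord j)) // cat_take occ_take [(l + j)%N]addnC leqnn.
rewrite andbT size_drop subn_gt0 ltn_ord andbT (ltn_trans (ltn_ord j) lt_el) /=.
by case: (0 < j)%N.
Qed.

Lemma occs_drop_at x a s : occ x a -> filter (leq a) (occs x) = a :: s ->
  occs (drop a x) = 0 :: map (subn^~ a) s.
Proof.
move=> occ_a e; rewrite (occs_drop w_neq0) ?e /= ?subnn //.
exact/ltnW/(occ_lt_size w_neq0).
Qed.

Lemma occs_drop_first x a s : occs x = a :: s -> occs (drop a x) = 0 :: map (subn^~ a) s.
Proof.
move=> e; case: (occs_cons w_neq0 e) => occ_a _ mem_s; apply: occs_drop_at => //.
rewrite e; apply/all_filterP => /=; rewrite leqnn /=; apply/allP => i.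
by rewrite mem_s => /andP [/ltnW].
Qed.

Lemma occs_drop_second x a b s : occs x = a :: b :: s ->
  occs (drop b x) = 0 :: map (subn^~ b) s.
Proof.
move=> e; case: (occs_cons2 e) => occ_b lt_ab _ le_bs; apply: occs_drop_at => //.
by rewrite e /= leqNgt lt_ab /= leqnn; congr (_ :: _); apply/all_filterP.
Qed.

Lemma cat_drop z j : occ (w ++ z) j -> w ++ drop j z = drop j (w ++ z).
Proof. by move/cat_drop_occ <-; rewrite -drop_drop drop_size_cat. Qed.

Lemma kclumps_after_nil c z : behead (occs (w ++ z)) = [::] -> kclumps_after c z = (c == k).
Proof. by rewrite /kclumps_after => ->. Qed.

(* Moving to the next occurrence j of w in w ++ z: it joins the current clump
   iff j < l, otherwise the current clump is closed. *)
Lemma kclumps_after_next c z j s : behead (occs (w ++ z)) = j :: s ->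
  kclumps_after c z = if (j < l)%N then kclumps_after c.+1 (drop j z)
                      else (c == k) + kclumps_after 1 (drop j z).
Proof.
move=> e; have e2 : occs (w ++ z) = 0 :: j :: s by rewrite occs_wcat e.
case: (occs_cons2 e2) => occ_j _ _ le_js.
have occs_rest : behead (occs (w ++ drop j z)) = map (subn^~ j) s.
  by rewrite cat_drop // (occs_drop_second e2).
rewrite /kclumps_after e /= !occs_rest.
by rewrite (scan_shift l k _ (leqnn j) le_js) (scan_shift l k 1 (leqnn j) le_js) ?subnn.
Qed.

Lemma nkclumps_first x a s : occs x = a :: s -> nkclumps w k x = kclumps_after 1 (drop (a + l) x).
Proof.
move=> e; case: (occs_cons w_neq0 e) => occ_a _ mem_s.
rewrite nkclumps_scan e /kclumps_after (cat_drop_occ occ_a) (occs_drop_first e) /=.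
by rewrite (@scan_shift l k a 1 s a) ?subnn //; apply/allP => i; rewrite mem_s => /andP [/ltnW].
Qed.

End ClumpsOfWords.

Local Open Scope ring_scope.
Import Order.TTheory GRing.Theory Num.Theory.

(* The coefficient of z^n in a
   Cauchy product only involves the first n+1 coefficients of the factors, so
   every ring law of fps_mul is inherited from polynomial multiplication
   through truncation. *)
Section PowerSeries.
Variable S : comUnitRingType.
Implicit Types f g h : fps S.
Local Notation one := (fps_one S).

Lemma fpsP f g : (forall n, f n = g n) -> f = g.
Proof. exact: functional_extensionality. Qed.

Definition fps_trunc n f : {poly S} := \poly_(i < n.+1) f i.

Lemma coef_fps_trunc n f i : (fps_trunc n f)`_i = if (i <= n)%N then f i else 0.
Proof. by rewrite coef_poly. Qed.

Lemma fps_mulE f g n : fps_mul f g n = (fps_trunc n f * fps_trunc n g)`_n.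
Proof.
rewrite coefM; apply: eq_bigr => j _.
by rewrite !coef_fps_trunc -ltnS ltn_ord leq_subr.
Qed.

Lemma coefM_low (p p' q q' : {poly S}) n :
  (forall i, (i <= n)%N -> p`_i = p'`_i) ->
  (forall i, (i <= n)%N -> q`_i = q'`_i) -> (p * q)`_n = (p' * q')`_n.
Proof.
move=> Hp Hq; rewrite !coefM; apply: eq_bigr => j _.
by rewrite Hp ?Hq ?leq_subr // -ltnS.
Qed.

Lemma fps_trunc_mul f g n i : (i <= n)%N ->
  (fps_trunc n (fps_mul f g))`_i = (fps_trunc n f * fps_trunc n g)`_i.
Proof.
move=> le_in; rewrite coef_fps_trunc le_in fps_mulE.
by apply: coefM_low => j le_ji; rewrite !coef_fps_trunc le_ji (leq_trans le_ji).
Qed.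

Lemma fps_mulC f g : fps_mul f g = fps_mul g f.
Proof. by apply: fpsP => n; rewrite !fps_mulE mulrC. Qed.

Lemma fps_mulA f g h : fps_mul f (fps_mul g h) = fps_mul (fps_mul f g) h.
Proof.
apply: fpsP => n; rewrite !fps_mulE.
rewrite (@coefM_low _ (fps_trunc n f) _ (fps_trunc n g * fps_trunc n h)) //;
  last exact: fps_trunc_mul.
rewrite [RHS](@coefM_low _ (fps_trunc n f * fps_trunc n g) _ (fps_trunc n h)) //;
  last exact: fps_trunc_mul.
by rewrite mulrA.
Qed.

Lemma fps_mulDl f g h :
  fps_mul (fps_add f g) h = fps_add (fps_mul f h) (fps_mul g h).
Proof.
by apply: fpsP => n; rewrite /fps_add -big_split; apply: eq_bigr => j _; rewrite mulrDl.
Qed.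

Lemma fps_mulDr f g h :
  fps_mul h (fps_add f g) = fps_add (fps_mul h f) (fps_mul h g).
Proof. by rewrite fps_mulC fps_mulDl !(fps_mulC h). Qed.

Lemma fps_mulBl f g h :
  fps_mul (fps_sub f g) h = fps_sub (fps_mul f h) (fps_mul g h).
Proof.
by apply: fpsP => n; rewrite /fps_sub -sumrB; apply: eq_bigr => j _; rewrite mulrBl.
Qed.

Lemma fps_mul_C (c : S) f : fps_mul (fps_C c) f = fps_scale c f.
Proof.
apply: fpsP => n; rewrite /fps_mul big_ord_recl /= subn0.
by rewrite big1 ?addr0 // => j _; rewrite mul0r.
Qed.

Lemma fps_scale1 f : fps_scale 1 f = f.
Proof. by apply: fpsP => n; rewrite /fps_scale mul1r. Qed.

Lemma fps_scale_mull c f g : fps_mul (fps_scale c f) g = fps_scale c (fps_mul f g).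
Proof.
by apply: fpsP => n; rewrite /fps_scale mulr_sumr; apply: eq_bigr => j _; rewrite mulrA.
Qed.

Lemma fps_scale_scale c d f : fps_scale c (fps_scale d f) = fps_scale (c * d) f.
Proof. by apply: fpsP => n; rewrite /fps_scale mulrA. Qed.

Lemma fps_mul1 f : fps_mul one f = f.
Proof. by rewrite fps_mul_C fps_scale1. Qed.

Lemma fps_mulr1 f : fps_mul f one = f.
Proof. by rewrite fps_mulC fps_mul1. Qed.

Lemma fps_mul_Xn_divXn l f : (forall j, (j < l)%N -> f j = 0) ->
  fps_mul (fps_Xn S l) (fps_divXn l f) = f.
Proof.
move=> f_low; apply: fpsP => n; rewrite /fps_mul /fps_Xn /fps_divXn.
case: (leqP l n) => [le_ln | lt_nl].
  rewrite (bigD1 (Ordinal (le_ln : (l < n.+1)%N))) //= eqxx mul1r subnK //.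
  rewrite big1 ?addr0 // => j ne_jl; case: eqP => [e|_]; last by rewrite mul0r.
  by case/eqP: ne_jl; apply: val_inj.
rewrite big1 ?f_low // => j _; case: eqP => [e|_]; last by rewrite mul0r.
by have := ltn_ord j; rewrite e ltnS leqNgt lt_nl.
Qed.

Lemma size_fps_inv_seq f n : size (fps_inv_seq f n) = n.+1.
Proof. by elim: n => //= n IHn; rewrite size_rcons IHn. Qed.

Lemma nth_fps_inv_seq f n j : (j <= n)%N -> nth 0 (fps_inv_seq f n) j = fps_inv f j.
Proof.
elim: n => [|n IHn]; first by rewrite leqn0 => /eqP ->.
rewrite leq_eqVlt => /orP[/eqP -> //|lt_jn].
by rewrite /= nth_rcons size_fps_inv_seq lt_jn IHn.
Qed.

Lemma fps_invS f n : fps_inv f n.+1 =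
  - (f 0%N)^-1 * \sum_(j < n.+1) f (n.+1 - j)%N * fps_inv f j.
Proof.
rewrite {1}/fps_inv /= nth_rcons size_fps_inv_seq ltnn eqxx; congr (_ * _).
by apply: eq_bigr => j _; rewrite nth_fps_inv_seq // -ltnS.
Qed.

Lemma fps_mulV f : f 0%N = 1 -> fps_mul f (fps_inv f) = one.
Proof.
move=> f0; rewrite fps_mulC; apply: fpsP => -[|n].
  by rewrite /fps_mul big_ord1 /fps_inv /= f0 invr1 mulr1.
rewrite /fps_mul big_ord_recr /= subnn f0 mulr1 fps_invS f0 invr1 mulN1r.
rewrite /fps_one /fps_C /=; apply/eqP; rewrite subr_eq0; apply/eqP.
by apply: eq_bigr => j _; rewrite mulrC.
Qed.

Lemma fps_inv_unique f g h : f 0%N = 1 -> fps_mul f g = h -> g = fps_mul (fps_inv f) h.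
Proof. by move=> f0 <-; rewrite fps_mulA (fps_mulC (fps_inv f)) fps_mulV // fps_mul1. Qed.

Lemma fps_solve_linear K g h : K 0%N = 0 ->
  g = fps_add h (fps_mul K g) -> g = fps_mul (fps_inv (fps_sub one K)) h.
Proof.
move=> K0 eq_g; apply: fps_inv_unique; first by rewrite /fps_sub /fps_one /fps_C K0 subr0.
by rewrite fps_mulBl fps_mul1; apply: fpsP => n; rewrite /fps_sub {1}eq_g /fps_add addrK.
Qed.

Lemma fps_inv_fix K : K 0%N = 0 ->
  fps_inv (fps_sub one K) = fps_add one (fps_mul K (fps_inv (fps_sub one K))).
Proof.
move=> K0; set J := fps_inv _.
have : fps_mul (fps_sub one K) J = one.
  by apply: fps_mulV; rewrite /fps_sub /fps_one /fps_C K0 subr0.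
rewrite fps_mulBl fps_mul1 => eJ.
apply: fpsP => n; rewrite /fps_add -{1}eJ /fps_sub.
by rewrite subrK.
Qed.

End PowerSeries.

Section Words.
Variable A : finType.

Fixpoint words (n : nat) : seq (seq A) :=
  if n is n'.+1 then [seq a :: t | a <- enum A, t <- words n'] else [:: [::]].

Lemma size_words n x : x \in words n -> size x = n.
Proof.
elim: n x => [|n IHn] x /=; first by rewrite inE => /eqP ->.
by case/allpairsP => [[a t] [_ /IHn size_t ->]] /=; rewrite size_t.
Qed.

Variable V : nmodType.

Lemma sum_tuples n (F : seq A -> V) : \sum_(x : n.-tuple A) F x = \sum_(x <- words n) F x.
Proof.
elim: n F => [|n IHn] F.
  rewrite /= big_seq1 (big_pred1 [tuple]) // => t /=.
  by symmetry; apply/eqP/val_inj; rewrite /= (tuple0 t).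
rewrite /= big_allpairs_dep.
rewrite (reindex (fun p : A * n.-tuple A => [tuple of p.1 :: p.2])) /=; last first.
  exists (fun t : n.+1.-tuple A => (thead t, [tuple of behead t])) => [[a t]|t] _ /=.
    by congr (_, _); apply: val_inj.
  by apply: val_inj => /=; case: t => [[|b s]].
rewrite -(pair_big predT predT (fun a (t : n.-tuple A) => F (a :: t))) /= -big_enum /=.
by apply: eq_bigr => a _; apply: IHn.
Qed.

Lemma sum_words_cat i j (F : seq A -> V) :
  \sum_(x <- words (i + j)) F x = \sum_(a <- words i) \sum_(b <- words j) F (a ++ b).
Proof.
elim: i F => [|i IHi] F; first by rewrite /= big_seq1.
by rewrite addSn /= !big_allpairs_dep; apply: eq_bigr => a _; apply: (IHi (fun x => F (a :: x))).
Qed.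
End Words.

Lemma big_ord_only (V : nmodType) n j0 (lt_j0 : (j0 < n.+1)%N) (F : 'I_n.+1 -> V) :
  (forall j : 'I_n.+1, (j : nat) != j0 -> F j = 0) -> \sum_(j < n.+1) F j = F (Ordinal lt_j0).
Proof. by move=> F0; rewrite (bigD1 (Ordinal lt_j0)) //= big1 ?addr0. Qed.

Section WeightedGF.
Variable R : fieldType.
Variable A : finType.
Variable p : A -> R.

Definition wgf (f : seq A -> {poly R}) : fps {poly R} := fun n => \sum_(x <- words A n) f x.

Lemma wgf_mul f g n :
  fps_mul (wgf f) (wgf g) n = \sum_(x <- words A n) \sum_(j < n.+1) f (take j x) * g (drop j x).
Proof.
rewrite /fps_mul /wgf exchange_big /=; apply: eq_bigr => j _.
have -> : words A n = words A (j + (n - j)) by rewrite subnKC // -ltnS.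
rewrite sum_words_cat mulr_suml.
apply: eq_big_seq => a words_a; rewrite mulr_sumr; apply: eq_bigr => b _.
by rewrite take_size_cat ?drop_size_cat // (size_words words_a).
Qed.

Lemma Pw_cat a b : Pw p (a ++ b) = Pw p a * Pw p b.
Proof. by rewrite /Pw big_cat. Qed.

Lemma gf_wgf (L : pred (seq A)) : gf p L = wgf (fun x => if L x then (Pw p x)%:P else 0).
Proof.
apply: fpsP => n; rewrite /gf /wgf rmorph_sum big_mkcond /=.
exact: (sum_tuples _ (fun x => if L x then (Pw p x)%:P else 0)).
Qed.
End WeightedGF.

Section Decomposition.
Variable R : fieldType.
Variable A : finType.
Variable p : A -> R.
Variable w : seq A.
Variable k : nat.
Hypothesis w_neq0 : (0 < size w)%N.
Local Notation l := (size w).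
Local Notation P x := ((Pw p x)%:P).

Definition clump_gf := wgf (fun x => P x * 'X^(nkclumps w k x)).
Definition tail_gf c := wgf (fun z => P z * 'X^(kclumps_after w k c z)).
Definition Mlong_gf := wgf (fun m => if inM w m && (l <= size m)%N then P m else 0).

Lemma P_take_drop x j : P (take j x) * P (drop j x) = P x.
Proof. by rewrite -polyCM -Pw_cat cat_take_drop. Qed.

Lemma clump_gf_first_occurrence : clump_gf = fps_add (Ng p w) (fps_mul (Rg p w) (tail_gf 1)).
Proof.
apply: fpsP => n; rewrite /fps_add /Ng /Rg !gf_wgf wgf_mul /clump_gf /wgf -big_split /=.
apply: eq_big_seq => x /size_words size_x; rewrite (inN_occs w_neq0).
case e: (occs w x) => [|a s] /=.
  rewrite (nkclumps_scan k w_neq0) e expr0 mulr1 big1 ?addr0 // => j _.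
  by rewrite (inR_take_nil w_neq0) ?mul0r.
case: (occs_cons w_neq0 e) => /andP [end_a _] _ _; rewrite size_x in end_a.
rewrite add0r (big_ord_only (end_a : (a + l < n.+1)%N)) /= => [|j ne_j]; last first.
  by rewrite (inR_take_first w_neq0 e) ?size_x -1?ltnS // (negbTE ne_j) mul0r.
by rewrite (inR_take_first w_neq0 e) ?size_x // eqxx mulrA P_take_drop (nkclumps_first k w_neq0 e).
Qed.

Lemma tail_gf_next_occurrence c :
  tail_gf c =
    fps_add (fps_mul (fps_C ('X^(c == k))) (fps_add (Ug p w) (fps_mul Mlong_gf (tail_gf 1))))
            (fps_mul (Kg p w) (tail_gf c.+1)).
Proof.
apply: fpsP => n; rewrite /fps_add fps_mul_C /fps_scale /Ug /Kg !gf_wgf !wgf_mul /tail_gf /wgf.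
rewrite -big_split mulr_sumr -big_split /=; apply: eq_big_seq => z /size_words size_z.
have size_take j : (j < n.+1)%N -> size (take j z) = j.
  by move=> lt_jn; rewrite size_takel // size_z -ltnS.
rewrite (inU_occs w_neq0); case e: (behead (occs w (w ++ z))) => [|j s] /=.
  have e1 : occs w (w ++ z) = [:: 0%N] by rewrite (occs_wcat w_neq0) e.
  rewrite (kclumps_after_nil k c e) !big1 ?addr0; first by rewrite mulrC.
    by move=> j _; rewrite inK_inM (inM_take_nil w_neq0) ?mul0r.
  by move=> j _; rewrite (inM_take_nil w_neq0) ?mul0r.
have e2 : occs w (w ++ z) = [:: 0%N, j & s] by rewrite (occs_wcat w_neq0) e.
case: (occs_cons2 w_neq0 e2) => /andP [end_j _] _ _ _.
have lt_jn : (j < n.+1)%N by rewrite ltnS -size_z -(leq_add2r l) [(size z + l)%N]addnC -size_cat.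
have inM_j j' : (j' < n.+1)%N -> inM w (take j' z) = (j' == j).
  by move=> lt_j'; rewrite (inM_take_second w_neq0 e2) // size_z -ltnS.
have inK_j j' : (j' < n.+1)%N -> inK w (take j' z) = (j' == j) && (j' < l)%N.
  by move=> lt_j'; rewrite inK_inM inM_j // size_take.
have inMl_j j' : (j' < n.+1)%N ->
    inM w (take j' z) && (l <= size (take j' z))%N = (j' == j) && (l <= j')%N.
  by move=> lt_j'; rewrite inM_j // size_take.
rewrite (kclumps_after_next k w_neq0 c e) add0r; case: (ltnP j l) => [lt_jl|le_lj].
  rewrite big1 ?mulr0 ?add0r => [|j' _]; last first.
    rewrite inMl_j //; case: eqP => [->|_]; last by rewrite mul0r.
    by rewrite leqNgt lt_jl mul0r.
  rewrite (big_ord_only lt_jn) /= => [|j' ne_j']; last by rewrite inK_j // (negbTE ne_j') mul0r.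
  by rewrite inK_j // eqxx lt_jl mulrA P_take_drop.
rewrite [X in _ + X]big1 ?addr0 => [|j' _]; last first.
  rewrite inK_j //; case: eqP => [->|_]; last by rewrite mul0r.
  by rewrite ltnNge le_lj mul0r.
rewrite (big_ord_only lt_jn) /= => [|j' ne_j']; last by rewrite inMl_j // (negbTE ne_j') mul0r.
by rewrite inMl_j // eqxx le_lj mulrA P_take_drop exprD mulrCA.
Qed.

End Decomposition.

(* Solving the system Z_c = x^[c = k] H + K Z_(c+1) (c >= 1), Z_c = Z_(k+1)
   for c > k, over any commutative ring: Z_(k+1) = H / (1 - K) and, going down,
   Z_(k-d) = (1/(1 - K) + (x - 1) K^d) H. *)
Section ClumpSystem.
Variable S : comUnitRingType.
Local Notation one := (fps_one S).
Variables (K H : fps S) (Z : nat -> fps S) (k : nat) (x : S).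
Hypothesis K0 : K 0%N = 0.
Hypothesis Z_next :
  forall c, Z c = fps_add (fps_mul (fps_C (x ^+ (c == k))) H) (fps_mul K (Z c.+1)).
Hypothesis Z_saturated : forall c, (k < c)%N -> Z c = Z k.+1.
Hypothesis k_gt0 : (0 < k)%N.

Local Notation J := (fps_inv (fps_sub one K)).

Definition clump_kernel d := fps_add J (fps_mul (fps_C (x - 1)) (fps_exp K d)).

Lemma clump_system_saturated : Z k.+1 = fps_mul J H.
Proof.
apply: fps_solve_linear => //; rewrite {1}Z_next (Z_saturated (ltnW (ltnSn k.+1))).
by rewrite (gtn_eqF (ltnSn k)) expr0 fps_mul_C fps_scale1.
Qed.

Lemma clump_system_solution d : (d < k)%N -> Z (k - d) = fps_mul (clump_kernel d) H.
Proof.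
have JH : fps_mul J H = fps_add H (fps_mul K (fps_mul J H)).
  by rewrite {1}(fps_inv_fix K0) fps_mulDl fps_mul1 fps_mulA.
elim: d => [|d IHd] lt_dk.
  rewrite subn0 Z_next eqxx expr1 clump_system_saturated /clump_kernel fps_mulDl fps_mulr1.
  rewrite {2}JH !fps_mul_C; apply: fpsP => n; rewrite /fps_add /fps_scale mulrBl mul1r.
  by rewrite addrAC [H n + _]addrC subrK.
have eS : (k - d = (k - d.+1).+1)%N by rewrite subnS prednK // subn_gt0 ltnW.
have ne_k : ((k - d.+1)%N == k) = false by apply: ltn_eqF; rewrite ltn_subrL k_gt0.
rewrite Z_next -eS IHd ?(ltnW lt_dk) // ne_k expr0 fps_mul_C fps_scale1 /clump_kernel !fps_mulDl /=.
rewrite !fps_mulDr -!fps_mulA (fps_mulA K (fps_C _)) (fps_mulC K (fps_C _)) -(fps_mulA (fps_C _) K).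
by rewrite [in RHS]JH; apply: fpsP => n; rewrite /fps_add addrA.
Qed.

Lemma clump_system_start : Z 1 = fps_mul (clump_kernel (k - 1)) H.
Proof. by rewrite -clump_system_solution ?subKn // subn1 prednK. Qed.

End ClumpSystem.

Lemma eliminate_start (S : comUnitRingType) (F N R M U Q Z1 : fps S) :
  F = fps_add N (fps_mul R Z1) -> Z1 = fps_mul Q (fps_add U (fps_mul M Z1)) -> M 0%N = 0 ->
  F = fps_add N (fps_mul (fps_mul (fps_mul R Q) (fps_inv (fps_sub (fps_one S) (fps_mul M Q)))) U).
Proof.
move=> eF eZ1 M0; have MQ0 : fps_mul M Q 0%N = 0 by rewrite /fps_mul big_ord1 M0 mul0r.
rewrite eF; congr fps_add.
have -> : Z1 = fps_mul (fps_inv (fps_sub (fps_one S) (fps_mul M Q))) (fps_mul Q U).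
  by apply: fps_solve_linear => //; rewrite (fps_mulC M Q) -fps_mulA -fps_mulDr -eZ1.
by rewrite -!fps_mulA (fps_mulA _ Q) (fps_mulC _ Q) -fps_mulA.
Qed.

Section ClumpGF.
Variable R : fieldType.
Variable A : finType.
Variable p : A -> R.
Variable w : seq A.
Variable k : nat.
Hypothesis w_neq0 : (0 < size w)%N.
Local Notation l := (size w).

Lemma Kg0 : Kg p w 0%N = 0.
Proof. by rewrite /Kg gf_wgf /wgf /= big_seq1 inK_inM /inM. Qed.

Lemma Mg_sub_Kg : fps_sub (Mg p w) (Kg p w) = Mlong_gf p w.
Proof.
apply: fpsP => n; rewrite /fps_sub /Mg /Kg !gf_wgf /Mlong_gf /wgf -sumrB.
apply: eq_bigr => x _; rewrite inK_inM; case: (inM w x); last by rewrite subr0.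
by case: ltnP => _; rewrite ?subrr ?subr0.
Qed.

(* R and M - K have no terms of degree < l, so they can be divided by z^l. *)
Lemma Mlong_gf_low j : (j < l)%N -> Mlong_gf p w j = 0.
Proof.
move=> lt_jl; rewrite /Mlong_gf /wgf big1_seq // => x /andP [_ /size_words ->].
by rewrite leqNgt lt_jl andbF.
Qed.

Lemma Rg_low j : (j < l)%N -> Rg p w j = 0.
Proof.
move=> lt_jl; rewrite /Rg gf_wgf /wgf big1_seq // => x /andP [_ /size_words size_x].
by rewrite /inR suffix_occ size_x leqNgt lt_jl.
Qed.

Lemma tail_gf_saturated c : (k < c)%N -> tail_gf p w k c = tail_gf p w k k.+1.
Proof.
move=> gt_ck; apply: fpsP => n; apply: eq_bigr => z _.
by rewrite /kclumps_after (scan_saturated _ _ _ gt_ck (ltnSn k)).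
Qed.

Lemma o_k_clump_gf n i : o_k p w k n i = (clump_gf p w k n)`_i.
Proof.
rewrite /o_k /clump_gf /wgf coef_sum big_mkcond /=.
rewrite (sum_tuples n (fun x => if nkclumps w k x == i then Pw p x else 0)).
by apply: eq_bigr => x _; rewrite coefCM coefXn eq_sym; case: eqP; rewrite ?mulr1 ?mulr0.
Qed.

Lemma div_piz_frakK F : pi_w p w != 0 -> (forall j, (j < l)%N -> F j = 0) ->
  fps_mul (div_piz p w F) (frakK p w k) = fps_mul F (clump_kernel (Kg p w) 'X (k - 1)).
Proof.
move=> pi_neq0 F_low; rewrite /div_piz /frakK fps_scale_mull (fps_mulC _ (fps_scale _ _)).
rewrite fps_scale_mull fps_scale_scale -polyCM mulVf // fps_scale1.
by rewrite fps_mulC fps_mulA (fps_mulC (fps_divXn _ _)) fps_mul_Xn_divXn.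
Qed.

End ClumpGF.

(* Only pi_w != 0 (from the positivity of p) and w nonempty are needed. *)
Theorem mainTheorem7 (R : realFieldType) (A : finType) (p : A -> R)
    (w : seq A) (k : nat) :
  (1 < #|A|)%N ->
  (forall a : A, 0 < p a) ->
  \sum_(a : A) p a = 1 ->
  (2 <= size w)%N ->
  (1 <= k)%N ->
  forall n i : nat, o_k p w k n i = (rhs7 p w k n)`_i.
Proof.
move=> _ p_gt0 _ size_w k_gt0 n i.
have w_neq0 : (0 < size w)%N by apply: leq_trans size_w.
have pi_neq0 : pi_w p w != 0 by apply/lt0r_neq0/prodr_gt0 => a _; apply: p_gt0.
rewrite o_k_clump_gf; suff -> : clump_gf p w k = rhs7 p w k by [].
rewrite /rhs7 Mg_sub_Kg.
rewrite !div_piz_frakK //; [|exact: Mlong_gf_low|exact: Rg_low].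
apply: eliminate_start (Mlong_gf_low _ w_neq0).
- exact: clump_gf_first_occurrence.
- apply: (clump_system_start (Kg0 p w)) k_gt0 => c; first exact: tail_gf_next_occurrence.
  exact: tail_gf_saturated.
Qed.
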